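(* Let $X_1=U_1\Sigma_1V_1^T$, $X_2=U_2\Sigma_2V_2^T$ and $(X_1~X_2)=U\Sigma V^T$ be (compact) SVDs, where $X_1,X_2$ have the same number of rows. Assume the nonzero singular values of $X_1$, of $X_2$, and of $(X_1~X_2)$ are each distinct. Suppose $U_1$ and $U_2$ may share some identical columns, and that every column of $U_1$ not appearing in $U_2$ is orthogonal to every column of $U_2$ not appearing in $U_1$. Then every column of $U_1$ and every column of $U_2$ is (up to sign) a column of $U$. *)

From HB Require Import structures.
From mathcomp Require Import all_boot all_order all_algebra.
From mathcomp Require Import reals.
Set Implicit Arguments. Unset Strict Implicit. Unset Printing Implicit Defensive.
Import Order.TTheory GRing.Theory Num.Theory.
Local Open Scope ring_scope.

Definition is_compact_svd (R : realType) (m n r : nat) (X : 'M[R]_(m, n))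
  (U : 'M[R]_(m, r)) (s : 'rV[R]_r) (V : 'M[R]_(n, r)) : Prop :=
  [/\ U^T *m U = 1%:M, V^T *m V = 1%:M,
      (forall i : 'I_r, 0 < s 0 i),
      (forall i j : 'I_r, (i <= j)%N -> s 0 j <= s 0 i)
    & X = U *m diag_mx s *m V^T].

Definition distinct_sv (R : realType) (r : nat) (s : 'rV[R]_r) : Prop :=
  injective (fun i : 'I_r => s 0 i).

Definition is_column_of (R : realType) (m r : nat) (v : 'cV[R]_m)
  (U : 'M[R]_(m, r)) : Prop := exists k : 'I_r, v = col k U.

Definition is_column_of_up_to_sign (R : realType) (m r : nat) (v : 'cV[R]_m)
  (U : 'M[R]_(m, r)) : Prop :=
  exists k : 'I_r, v = col k U \/ v = - col k U.

(* (X1 X2)(X1 X2)^T = X1 X1^T + X2 X2^T, i.e. U S^2 U^T = U1 S1^2 U1^T + U2 S2^2 U2^T.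
   The hypotheses make every column of U1 (and of U2) an eigenvector of the
   right-hand side with a positive eigenvalue: a shared column gets the sum of
   both squared singular values, an unshared one is killed by the other term.
   Since the entries of S^2 are distinct, the eigenspaces of U S^2 U^T for
   nonzero eigenvalues are the lines spanned by the columns of U, so a unit
   eigenvector is one of them up to sign. *)

From HB Require Import structures.
From mathcomp Require Import all_boot all_order all_algebra.
From mathcomp Require Import reals.
Import Order.TTheory GRing.Theory Num.Theory.
Local Open Scope ring_scope.

Set Implicit Arguments.
Unset Strict Implicit.
Unset Printing Implicit Defensive.

Definition sqr_row (R : pzSemiRingType) (r : nat) (s : 'rV[R]_r) : 'rV[R]_r :=
  \row_j (s 0 j ^+ 2).

Section OrthonormalColumns.
Variables (R : comPzRingType) (m r : nat) (U : 'M[R]_(m, r)).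
Hypothesis UtU : U^T *m U = 1%:M.

Lemma trmx_mul_col (i : 'I_r) : U^T *m col i U = delta_mx i 0.
Proof. by rewrite colE mulmxA UtU mul1mx. Qed.

Lemma tr_col_mul_col (i j : 'I_r) : (col i U)^T *m col j U = (i == j)%:R%:M.
Proof.
rewrite tr_col -row_mul trmx_mul_col.
by apply/matrixP => x y; rewrite !ord1 !mxE eqxx andbT mulr1n.
Qed.

Lemma gram_diag_col (d : 'rV[R]_r) (i : 'I_r) :
  U *m diag_mx d *m U^T *m col i U = d 0 i *: col i U.
Proof.
have diag_delta : diag_mx d *m delta_mx i 0 = d 0 i *: delta_mx i (0 : 'I_1).
  apply/matrixP => p q; rewrite mul_diag_mx !mxE.
  by case: (eqVneq p i) => [->|]; rewrite ?mulr0.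
by rewrite -mulmxA trmx_mul_col -mulmxA diag_delta -scalemxAr -colE.
Qed.

End OrthonormalColumns.

Section DiagonalEigenvectors.
Variables (F : fieldType) (r : nat) (d : 'rV[F]_r).
Hypothesis d_inj : injective (fun i : 'I_r => d 0 i).

Lemma diag_eigenvector_delta (a : 'cV[F]_r) (lam : F) (k : 'I_r) :
  diag_mx d *m a = lam *: a -> a k 0 != 0 -> a = a k 0 *: delta_mx k 0.
Proof.
move=> eig_a ak.
have eig_entry i : a i 0 != 0 -> d 0 i = lam.
  move=> ai; apply: (mulIf ai); move/matrixP: eig_a => /(_ i 0).
  by rewrite mul_diag_mx !mxE.
apply/matrixP => i j; rewrite ord1 !mxE.
case: (eqVneq i k) => [->|ik]; first by rewrite eqxx mulr1.
rewrite mulr0; apply/eqP; apply: contraNT ik => ai.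
by apply/eqP/d_inj; rewrite /= !eig_entry.
Qed.

Lemma unit_eigenvector_col (m : nat) (U : 'M[F]_(m, r)) (u : 'cV[F]_m) (lam : F) :
  U^T *m U = 1%:M -> lam != 0 -> u^T *m u = 1%:M ->
  U *m diag_mx d *m U^T *m u = lam *: u ->
  exists k, u = col k U \/ u = - col k U.
Proof.
move=> UtU lam0 u_unit eig_u.
set a := U^T *m u.
have eig_a : diag_mx d *m a = lam *: a.
  by rewrite /a scalemxAr -eig_u !mulmxA UtU mul1mx.
have u_Ua : u = U *m a.
  apply: (scalerI lam0).
  by rewrite -eig_u scalemxAr -eig_a !mulmxA.
clearbody a.
have a_unit : a^T *m a = 1%:M.
  by rewrite -u_unit u_Ua trmx_mul mulmxA -(mulmxA a^T) UtU mulmx1.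
have [k ak] : exists k, a k 0 != 0.
  case: (pickP (fun k => a k 0 != 0)) => [k ak|a0]; first by exists k.
  have a_eq0 : a = 0.
    by apply/matrixP => i j; rewrite ord1 mxE; apply/eqP/negbFE; rewrite a0.
  by move: a_unit; rewrite a_eq0 trmx0 mul0mx => /eqP; rewrite eq_sym oner_eq0.
have [c a_delta] : exists c, a = c *: delta_mx k 0.
  by exists (a k 0); exact: diag_eigenvector_delta eig_a ak.
have c_sqr : c ^+ 2 = 1.
  move/matrixP: a_unit => /(_ 0 0).
  rewrite a_delta linearZ [(c *: _)^T]linearZ /= -scalemxAl trmx_delta mul_delta_mx.
  by rewrite !mxE /= mulr1 expr2.
exists k; rewrite u_Ua a_delta -scalemxAr -colE.
by move/eqP: c_sqr; rewrite sqrf_eq1 => /orP[]/eqP->; [left|right];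
  rewrite ?scale1r ?scaleN1r.
Qed.

End DiagonalEigenvectors.

Section SquaredSingularValues.
Variables (R : numDomainType) (r : nat) (s : 'rV[R]_r).
Hypothesis s_gt0 : forall i, 0 < s 0 i.

Lemma sqr_row_gt0 (i : 'I_r) : 0 < sqr_row s 0 i.
Proof. by rewrite mxE exprn_gt0. Qed.

Lemma sqr_row_inj : injective (fun i => s 0 i) -> injective (fun i => sqr_row s 0 i).
Proof.
move=> s_inj i j /=; rewrite !mxE => /eqP.
by rewrite eqrXn2 ?ltW // => /eqP /s_inj.
Qed.

End SquaredSingularValues.

Lemma svd_gram (R : realType) (m n r : nat) (X : 'M[R]_(m, n))
    (U : 'M[R]_(m, r)) (s : 'rV[R]_r) (V : 'M[R]_(n, r)) :
  is_compact_svd X U s V -> X *m X^T = U *m diag_mx (sqr_row s) *m U^T.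
Proof.
case=> _ VtV _ _ ->.
have -> : diag_mx (sqr_row s) = diag_mx s *m diag_mx s.
  by rewrite mulmx_diag; congr diag_mx; apply/rowP => j; rewrite !mxE expr2.
rewrite !trmx_mul trmxK tr_diag_mx (mulmxA (U *m diag_mx s *m V^T) V).
by rewrite -(mulmxA _ V^T V) VtV mulmx1 !mulmxA.
Qed.

Lemma is_column_ofP (R : realType) (m r : nat) (v : 'cV[R]_m) (U : 'M[R]_(m, r)) :
  reflect (is_column_of v U) [exists k, v == col k U].
Proof. by apply: (iffP existsP) => -[k /eqP]; exists k. Qed.

Section GramSum.
Variables (R : realType) (m ra rb : nat).
Variables (A : 'M[R]_(m, ra)) (B : 'M[R]_(m, rb)) (da : 'rV[R]_ra) (db : 'rV[R]_rb).
Hypotheses (AtA : A^T *m A = 1%:M) (BtB : B^T *m B = 1%:M).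
Hypotheses (da_gt0 : forall i, 0 < da 0 i) (db_gt0 : forall j, 0 < db 0 j).
Hypothesis AB_orth : forall i j,
  ~ is_column_of (col i A) B -> ~ is_column_of (col j B) A ->
  (col i A)^T *m col j B = 0.

Lemma trmx_mul_col_eq0 (i : 'I_ra) : ~ is_column_of (col i A) B -> B^T *m col i A = 0.
Proof.
move=> iNB; apply/row_matrixP => j; rewrite row_mul row0 -tr_col.
have [[k jk] | jNA] := is_column_ofP (col j B) A.
  have ki : k != i by apply/eqP => ki; apply: iNB; exists j; rewrite jk ki.
  by rewrite jk tr_col_mul_col // (negbTE ki) raddf0.
by rewrite -[LHS]trmxK trmx_mul trmxK AB_orth // trmx0.
Qed.

Lemma gram_add_col_eigen (i : 'I_ra) : exists2 lam, 0 < lam &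
  (A *m diag_mx da *m A^T + B *m diag_mx db *m B^T) *m col i A = lam *: col i A.
Proof.
rewrite mulmxDl gram_diag_col //.
have [[j ij] | iNB] := is_column_ofP (col i A) B.
  exists (da 0 i + db 0 j); first by rewrite addr_gt0.
  by rewrite {2}ij gram_diag_col // -ij scalerDl.
exists (da 0 i) => //.
by rewrite -mulmxA trmx_mul_col_eq0 // mulmx0 addr0.
Qed.

Lemma gram_add_col_up_to_sign (r : nat) (U : 'M[R]_(m, r)) (s : 'rV[R]_r) :
  U^T *m U = 1%:M -> injective (fun k => s 0 k) ->
  U *m diag_mx s *m U^T = A *m diag_mx da *m A^T + B *m diag_mx db *m B^T ->
  forall i, is_column_of_up_to_sign (col i A) U.
Proof.
move=> UtU s_inj gram i; have [lam lam_gt0 eig] := gram_add_col_eigen i.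
have u_unit : (col i A)^T *m col i A = 1%:M by rewrite tr_col_mul_col // eqxx.
by apply: (unit_eigenvector_col s_inj UtU (lt0r_neq0 lam_gt0) u_unit); rewrite gram.
Qed.

End GramSum.

Theorem mainTheorem4 (R : realType) (m n1 n2 r1 r2 r : nat)
  (X1 : 'M[R]_(m, n1)) (X2 : 'M[R]_(m, n2))
  (U1 : 'M[R]_(m, r1)) (s1 : 'rV[R]_r1) (V1 : 'M[R]_(n1, r1))
  (U2 : 'M[R]_(m, r2)) (s2 : 'rV[R]_r2) (V2 : 'M[R]_(n2, r2))
  (U : 'M[R]_(m, r)) (s : 'rV[R]_r) (V : 'M[R]_(n1 + n2, r)) :
  is_compact_svd X1 U1 s1 V1 ->
  is_compact_svd X2 U2 s2 V2 ->
  is_compact_svd (row_mx X1 X2) U s V ->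
  distinct_sv s1 -> distinct_sv s2 -> distinct_sv s ->
  (forall (i : 'I_r1) (j : 'I_r2),
      ~ is_column_of (col i U1) U2 ->
      ~ is_column_of (col j U2) U1 ->
      (col i U1)^T *m col j U2 = 0) ->
  (forall i : 'I_r1, is_column_of_up_to_sign (col i U1) U) /\
  (forall j : 'I_r2, is_column_of_up_to_sign (col j U2) U).
Proof.
move=> svd1 svd2 svd _ _ s_inj orth12.
have [U1tU1 _ s1_gt0 _ _] := svd1; have [U2tU2 _ s2_gt0 _ _] := svd2.
have [UtU _ s_gt0 _ _] := svd.
have gram : U *m diag_mx (sqr_row s) *m U^T =
    U1 *m diag_mx (sqr_row s1) *m U1^T + U2 *m diag_mx (sqr_row s2) *m U2^T.
  by rewrite -(svd_gram svd) -(svd_gram svd1) -(svd_gram svd2) tr_row_mx mul_row_col.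
have orth21 j i : ~ is_column_of (col j U2) U1 -> ~ is_column_of (col i U1) U2 ->
    (col j U2)^T *m col i U1 = 0.
  by move=> jNU1 iNU2; rewrite -[LHS]trmxK trmx_mul trmxK orth12 // trmx0.
have sqr_inj := sqr_row_inj s_gt0 s_inj.
split.
  exact: (gram_add_col_up_to_sign U1tU1 U2tU2 (sqr_row_gt0 s1_gt0) (sqr_row_gt0 s2_gt0)
    orth12 UtU sqr_inj gram).
apply: (gram_add_col_up_to_sign U2tU2 U1tU1 (sqr_row_gt0 s2_gt0) (sqr_row_gt0 s1_gt0)
  orth21 UtU sqr_inj).
by rewrite gram addrC.
Qed.
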